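(* Let $A\in M_m(R)$ be non-singular with $m\in\{2,3\}$, and write $f_A(x)=\sum_{k=0}^m a_kx^k$, $f_{A^\nabla}(x)=\sum_{k=0}^m b_kx^k$. Then $\det(A)f_{A^\nabla}(x)\models_{gs}x^mf_A(x^{-1})$, i.e. $\det(A)b_k\models_{gs}a_{m-k}$ for all $k$, and when $m=2$ equality $\det(A)f_{A^\nabla}(x)=x^2f_A(x^{-1})$ holds.
   Context: Supertropical semiring $R=T\cup G\cup\{-\infty\}$: $T=\mathcal G$ an ordered abelian group (tangible), $G=\{a^\nu\}$ a copy (ghost); $a+b$ is the element of larger $\nu$-value if the $\nu$-values differ and $a^\nu$ if equal; multiplication adds $\nu$-values, is ghost if a factor is ghost, $-\infty$ absorbing; $0_R=-\infty$, $1_R=0$. Ghost surpassing: $a\models_{gs}b$ iff $a=b$, or $a\in G$ with $\nu$-value of $a$ $\geq$ that of $b$; for polynomials it is coefficientwise. $\det(A)=\sum_{\sigma}\prod_i a_{i,\sigma(i)}$; non-singular iff $\det(A)\in T$; $\operatorname{adj}(A)_{i,j}=\det(A_{j,i})$; $A^\nabla=\det(A)^{-1}\operatorname{adj}(A)$. $f_M(x)=\det(xI+M)$ has $x^k$-coefficient the sum of determinants of all $(m-k)\times(m-k)$ principal submatrices of $M$; $x^mf_A(x^{-1})$ denotes $\sum_{k=0}^m a_{m-k}x^k$. *)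

From HB Require Import structures.
From mathcomp Require Import all_boot all_order all_algebra all_fingroup.
Set Implicit Arguments. Unset Strict Implicit. Unset Printing Implicit Defensive.
Import GRing.Theory.
Local Open Scope ring_scope.

Definition ordered_group (G : zmodType) (le : rel G) : Prop :=
  [/\ (forall a, le a a),
      (forall a b, le a b -> le b a -> a = b),
      (forall a b c, le a b -> le b c -> le a c),
      (forall a b, le a b || le b a)
    & (forall a b c, le a b -> le (a + c) (b + c))].

(* Supertropical semiring R = T ∪ G ∪ {-oo}: Tan a (tangible), Gh a = a^nu (ghost). *)
Inductive stropical (G : Type) : Type :=
  | NegInf : stropical G
  | Tan : G -> stropical G
  | Gh : G -> stropical G.
Arguments NegInf {G}.

Section Supertropical.
Variables (G : zmodType) (le : rel G).

(* nu-value of a non-(-oo) element *)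
Definition stval (x : stropical G) : G :=
  match x with NegInf => 0 | Tan a => a | Gh a => a end.

Definition stadd (x y : stropical G) : stropical G :=
  match x, y with
  | NegInf, _ => y
  | _, NegInf => x
  | _, _ => let a := stval x in let b := stval y in
            if a == b then Gh a else if le a b then y else x
  end.

Definition stmul (x y : stropical G) : stropical G :=
  match x, y with
  | NegInf, _ => NegInf
  | _, NegInf => NegInf
  | Tan a, Tan b => Tan (a + b)
  | _, _ => Gh (stval x + stval y)
  end.

Definition stone : stropical G := Tan 0.

(* inverse of a tangible element (used only for tangible det) *)
Definition stinv (x : stropical G) : stropical G :=
  match x with NegInf => NegInf | Tan a => Tan (- a) | Gh a => Gh (- a) end.

Definition tangible (x : stropical G) : bool :=
  if x is Tan _ then true else false.

Definition gs (x y : stropical G) : Prop :=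
  x = y \/ exists g, x = Gh g /\
    match y with NegInf => True | Tan h => le h g | Gh h => le h g end.

Definition stdet (n : nat) (A : 'M[stropical G]_n) : stropical G :=
  \big[stadd/NegInf]_(s : 'S_n) \big[stmul/stone]_(i < n) A i (s i).

Definition stadj (n : nat) (A : 'M[stropical G]_n) : 'M[stropical G]_n :=
  \matrix_(i, j) stdet (row' j (col' i A)).

Definition stnabla (n : nat) (A : 'M[stropical G]_n) : 'M[stropical G]_n :=
  \matrix_(i, j) stmul (stinv (stdet A)) (stadj A i j).

Definition principal_sub (n : nat) (M : 'M[stropical G]_n) (S : {set 'I_n})
  : 'M[stropical G]_#|S| :=
  \matrix_(i, j) M (enum_val i) (enum_val j).

(* x^k-coefficient of f_M(x) = det(xI + M): the sum of the determinants of
   all (n-k)x(n-k) principal submatrices of M *)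
Definition charcoef (n : nat) (M : 'M[stropical G]_n) (k : nat) : stropical G :=
  \big[stadd/NegInf]_(S : {set 'I_n} | #|S| == (n - k)%N) stdet (principal_sub M S).

End Supertropical.

From HB Require Import structures.
From mathcomp Require Import all_boot all_order all_algebra all_fingroup.
From mathcomp Require Import zify.
From Stdlib Require Import Ring.
Set Implicit Arguments. Unset Strict Implicit. Unset Printing Implicit Defensive.
Import GRing.Theory.
Local Open Scope ring_scope.

(* Since A^nabla = det(A)^{-1} adj(A) and scaling a matrix by w scales the
   x^k-coefficient of its characteristic polynomial by w^(m-k), the theorem
   reduces (for any size m) to the adjugate identities
       c_k(adj A) |=gs det(A)^(m-k-1) c_{m-k}(A)     (k < m),
   the case k = m being det(A) * 1 = c_0(A).  These identities are then
   verified for m = 2 (exactly) and m = 3 (up to doubled terms) by expanding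
   determinants and principal minors explicitly and comparing polynomials. *)

Section Supertropical.
Variables (G : zmodType) (le : rel G) (HG : ordered_group le).

Implicit Types (x y z : stropical G) (a b c : G).
Local Notation "x +s y" := (stadd le x y) (at level 50, left associativity).
Local Notation "x *s y" := (stmul x y) (at level 40, left associativity).
Local Notation "1s" := (stone G).

Lemma le_refl a : le a a. Proof. by case: HG. Qed.
Lemma le_anti a b : le a b -> le b a -> a = b. Proof. by case: HG => _ h _ _ _; apply: h. Qed.
Lemma le_trans a b c : le a b -> le b c -> le a c. Proof. by case: HG => _ _ h _ _; apply: h. Qed.
Lemma le_total a b : le a b || le b a. Proof. by case: HG. Qed.

Lemma le_addr a b c : le (a + c) (b + c) = le a b.
Proof.
case: HG => _ _ _ _ h; apply/idP/idP; last exact: h.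
by move/(h _ _ (- c)); rewrite !addrK.
Qed.

Lemma le_addl a b c : le (c + a) (c + b) = le a b.
Proof. by rewrite ![c + _]addrC le_addr. Qed.

Lemma eq_addr a b c : (a + c == b + c) = (a == b).
Proof. exact: (inj_eq (@addIr G c)). Qed.

(* Trichotomy, reflecting all four comparisons that the addition may test. *)
Variant compare_spec a b : bool -> bool -> bool -> bool -> Prop :=
| CompareEq of a = b : compare_spec a b true true true true
| CompareLt of a <> b & le a b : compare_spec a b false false true false
| CompareGt of b <> a & le b a : compare_spec a b false false false true.

Lemma compareP a b : compare_spec a b (a == b) (b == a) (le a b) (le b a).
Proof.
case: (eqVneq a b) => [->|ne]; first by rewrite le_refl; constructor.
have := le_total a b; case ab: (le a b); case ba: (le b a) => //= _.
- by rewrite (le_anti ab ba) eqxx in ne.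
- by constructor=> //; apply/eqP.
- by constructor=> //; apply/eqP; rewrite eq_sym.
Qed.

(* The semiring laws below are checked by exhaustive case analysis on the
   kinds of the arguments and on the relative order of their nu-values;
   [split_compare] performs one comparison split, and [order_absurd] closes
   the branches whose order assumptions are contradictory. *)
Ltac order_absurd := exfalso; match goal with
 | H1 : is_true (le ?x ?y), H2 : is_true (le ?y ?x), H3 : ?x <> ?y |- _ =>
     apply: H3; exact: le_anti H1 H2
 | H1 : is_true (le ?x ?y), H2 : is_true (le ?y ?z), H3 : is_true (le ?z ?x),
   H4 : ?x <> ?y |- _ => apply: H4; exact: le_anti H1 (le_trans H2 H3)
 end.
Ltac compare_on a b :=
  case: (compareP a b) => [?|? ?|? ?]; [subst; rewrite /= ?eqxx ?le_refl | | ];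
  try done; try (match goal with H : ?x <> ?x |- _ => by case: H end).
Ltac split_compare := match goal with
  | |- context [?a == ?b] => compare_on a b
  | |- context [le ?a ?b] => compare_on a b end; simpl.
Ltac exhaust := repeat (split_compare; try done); try order_absurd.

Lemma addC x y : x +s y = y +s x.
Proof. by case: x => [|a|a]; case: y => [|b|b] //=; exhaust. Qed.

Lemma add0s x : NegInf +s x = x. Proof. by []. Qed.
Lemma adds0 x : x +s NegInf = x. Proof. by case: x. Qed.

Lemma addA x y z : x +s (y +s z) = x +s y +s z.
Proof.
by case: x => [|a|a]; case: y => [|b|b]; case: z => [|c|c] //=; rewrite ?adds0 //; exhaust.
Qed.

Lemma mulC x y : x *s y = y *s x.
Proof. by case: x => [|a|a]; case: y => [|b|b] //=; rewrite addrC. Qed.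
Lemma mulA x y z : x *s (y *s z) = x *s y *s z.
Proof. by case: x => [|a|a]; case: y => [|b|b]; case: z => [|c|c] //=; rewrite addrA. Qed.
Lemma mul1s x : 1s *s x = x.
Proof. by case: x => [|a|a] //=; rewrite add0r. Qed.
Lemma muls1 x : x *s 1s = x. Proof. by rewrite mulC mul1s. Qed.
Lemma mul0s x : NegInf *s x = NegInf. Proof. by []. Qed.
Lemma muls0 x : x *s NegInf = NegInf. Proof. by case: x. Qed.

(* Distributivity holds because multiplication by a fixed element shifts all
   nu-values by the same amount, hence preserves every comparison. *)
Lemma mulDl x y z : (x +s y) *s z = x *s z +s y *s z.
Proof.
case: z => [|c|c]; first by rewrite !muls0.
all: by case: x => [|a|a]; case: y => [|b|b] //=; rewrite ?eq_addr ?le_addr; exhaust.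
Qed.

Lemma mulDr z x y : z *s (x +s y) = z *s x +s z *s y.
Proof. by rewrite !(mulC z) mulDl. Qed.

Definition stropical_semiring :
  semi_ring_theory NegInf 1s (stadd le) (@stmul G) (@eq _) :=
  mk_srt _ _ _ _ _ add0s addC addA mul1s mul0s mulC mulA mulDl.

Add Ring stropical_ring : stropical_semiring.

HB.instance Definition _ :=
  Monoid.isComLaw.Build (stropical G) NegInf (stadd le) addA addC add0s.
HB.instance Definition _ :=
  Monoid.isComLaw.Build (stropical G) 1s (@stmul G) mulA mulC mul1s.
HB.instance Definition _ :=
  Monoid.isMulLaw.Build (stropical G) NegInf (@stmul G) mul0s muls0.
HB.instance Definition _ :=
  Monoid.isAddLaw.Build (stropical G) (@stmul G) (stadd le) mulDl mulDr.

Lemma gs_mul w x y : gs le x y -> gs le (w *s x) (w *s y).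
Proof.
case=> [->|[g [-> hg]]]; first by left.
case: w => [|k|k]; first by left.
all: right; eexists; split; first reflexivity.
all: by case: y hg => [|h|h] //= hg; rewrite le_addl.
Qed.

Lemma addss t : t +s t = if t is NegInf then NegInf else Gh (stval t).
Proof. by case: t => [|a|a] //=; rewrite eqxx. Qed.

Lemma gs_addGh x g : gs le (x +s Gh g) x.
Proof.
case: x => [|a|a] /=; first by right; exists g.
all: split_compare; first [by left | by right; exists g; split; rewrite ?le_refl].
Qed.

Lemma gs_add_double x t : gs le (x +s (t +s t)) x.
Proof. by rewrite addss; case: t => [|a|a]; [left; rewrite adds0 | exact: gs_addGh ..]. Qed.

Definition stpow x n : stropical G := iter n (stmul x) 1s.

Lemma stpow0 x : stpow x 0 = 1s. Proof. by []. Qed.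
Lemma stpowS x n : stpow x n.+1 = x *s stpow x n. Proof. by []. Qed.

Lemma inv_tangible x : tangible x -> stinv x *s x = 1s.
Proof. by case: x => //= a _; rewrite addNr. Qed.

Lemma stpow_cancel d j y : tangible d -> stpow (stinv d) j *s (stpow d j *s y) = y.
Proof.
move=> hd; elim: j => [|j IHj]; first by rewrite !mul1s.
rewrite !stpowS -[RHS]IHj.
transitivity ((stinv d *s d) *s (stpow (stinv d) j *s (stpow d j *s y))); first by ring.
by rewrite inv_tangible // mul1s.
Qed.

(* Laplace expansion of the (permanent-like) supertropical determinant along
   the first row; the reindexing of permutations is that of mathcomp's
   [expand_det_row], without the signs. *)
Lemma det_expand n (B : 'M[stropical G]_n.+1) :
  stdet le B = \big[stadd le/NegInf]_(j < n.+1) (B ord0 j *s stdet le (row' ord0 (col' j B))).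
Proof.
rewrite /stdet (partition_big (fun s : 'S_n.+1 => s ord0) predT) //=.
apply: eq_bigr => j0 _; rewrite big_distrr /=.
rewrite (reindex (lift_perm ord0 j0)); last first.
  pose ulsf i (s : 'S_n.+1) k := odflt k (unlift (s i) (s (lift i k))).
  have ulsfK i (s : 'S_n.+1) k: lift (s i) (ulsf i s k) = s (lift i k).
    rewrite /ulsf; have:= neq_lift i k.
    by rewrite -(can_eq (permK s)) => /unlift_some[] ? ? ->.
  have inj_ulsf: injective (ulsf ord0 _).
    move=> s; apply: can_inj (ulsf (s ord0) s^-1%g) _ => k'.
    by rewrite {1}/ulsf ulsfK !permK liftK.
  exists (fun s => perm (inj_ulsf s)) => [s _ | s].
    by apply/permP=> k'; rewrite permE /ulsf lift_perm_lift lift_perm_id liftK.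
  move/(s _ =P _) => si0; apply/permP=> k.
  case: (unliftP ord0 k) => [k'|] ->; rewrite ?lift_perm_id //.
  by rewrite lift_perm_lift -si0 permE ulsfK.
apply: eq_big => [s | s _]; first by rewrite lift_perm_id eqxx.
rewrite big_ord_recl lift_perm_id; congr (_ *s _).
by apply: eq_bigr => k _; rewrite !mxE lift_perm_lift.
Qed.

Lemma det0 (B : 'M[stropical G]_0) : stdet le B = 1s.
Proof.
rewrite /stdet (big_pred1 1%g) ?big_ord0 // => s.
by apply/esym/eqP/permP => -[].
Qed.

Lemma det_cast n n' (e : n = n') (B : 'M[stropical G]_n) :
  stdet le (castmx (e, e) B) = stdet le B.
Proof. by subst; rewrite castmx_id. Qed.

Definition stscale n w (M : 'M[stropical G]_n) : 'M[stropical G]_n :=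
  \matrix_(i, j) (w *s M i j).

Lemma det_scale n w (M : 'M[stropical G]_n) :
  stdet le (stscale w M) = stpow w n *s stdet le M.
Proof.
rewrite /stdet big_distrr; apply: eq_bigr => s _.
under eq_bigr do rewrite mxE.
by rewrite big_split /= big_const_ord.
Qed.

Lemma charcoef_scale n w (M : 'M[stropical G]_n) k :
  charcoef le (stscale w M) k = stpow w (n - k) *s charcoef le M k.
Proof.
rewrite /charcoef big_distrr; apply: eq_bigr => S /eqP cardS.
have -> : principal_sub (stscale w M) S = stscale w (principal_sub M S).
  by apply/matrixP => i j; rewrite !mxE.
by rewrite det_scale; move: (stdet _ _) => D; rewrite cardS.
Qed.

Lemma nablaE n (A : 'M[stropical G]_n) :
  stnabla le A = stscale (stinv (stdet le A)) (stadj le A).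
Proof. by apply/matrixP => i j; rewrite !mxE. Qed.


Lemma charcoef_top n (M : 'M[stropical G]_n) : charcoef le M n = 1s.
Proof.
rewrite /charcoef subnn (big_pred1 set0) => [|S]; last by rewrite /= cards_eq0.
by rewrite -(det_cast (cards0 _)) det0.
Qed.

Lemma enum_val_setT n (i : 'I_#|[set: 'I_n]|) : enum_val i = i :> nat.
Proof.
rewrite /enum_val enum_setT -enumT /=.
by apply: nth_enum_ord; move: (ltn_ord i); rewrite {2}cardsT card_ord.
Qed.

Lemma charcoef_det n (M : 'M[stropical G]_n) : charcoef le M 0 = stdet le M.
Proof.
have cardT : #|[set: 'I_n]| = n by rewrite cardsT card_ord.
rewrite /charcoef subn0 (big_pred1 setT) => [|S /=]; last first.
  have := max_card (mem S); rewrite card_ord => leSn.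
  by rewrite eqEcard subsetT cardT eqn_leq leSn.
rewrite -(det_cast cardT); congr stdet; apply/matrixP => i j.
by rewrite castmxE mxE; congr (M _ _); apply/val_inj; rewrite /= enum_val_setT.
Qed.

Lemma charcoef_nabla n (A : 'M[stropical G]_n) k : tangible (stdet le A) ->
  (k < n)%N -> stdet le A *s charcoef le (stnabla le A) k =
  stpow (stinv (stdet le A)) (n - k).-1 *s charcoef le (stadj le A) k.
Proof.
move=> hd hk; rewrite nablaE charcoef_scale.
have -> : (n - k = (n - k).-1.+1)%N by rewrite prednK // subn_gt0.
set u := stinv _; set c := charcoef _ _ _; rewrite stpowS.
transitivity ((u *s stdet le A) *s (stpow u (n - k).-1 *s c)); first by ring.
by rewrite inv_tangible // mul1s.
Qed.

Lemma charcoef_nabla_top n (A : 'M[stropical G]_n) :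
  stdet le A *s charcoef le (stnabla le A) n = charcoef le A 0.
Proof. by rewrite nablaE charcoef_scale subnn charcoef_top charcoef_det mul1s mulC mul1s. Qed.

Lemma nabla_charcoef_gs n (A : 'M[stropical G]_n) : tangible (stdet le A) ->
  (forall k, (k < n)%N -> gs le (charcoef le (stadj le A) k)
     (stpow (stdet le A) (n - k).-1 *s charcoef le A (n - k))) ->
  forall k, (k <= n)%N ->
  gs le (stdet le A *s charcoef le (stnabla le A) k) (charcoef le A (n - k)).
Proof.
move=> hd hadj k; rewrite leq_eqVlt => /predU1P[->|hk].
  by rewrite charcoef_nabla_top subnn; left.
rewrite charcoef_nabla // -(stpow_cancel (n - k).-1 (charcoef le A (n - k)) hd).
exact/gs_mul/hadj.
Qed.

Lemma nabla_charcoef_eq n (A : 'M[stropical G]_n) : tangible (stdet le A) ->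
  (forall k, (k < n)%N -> charcoef le (stadj le A) k =
     stpow (stdet le A) (n - k).-1 *s charcoef le A (n - k)) ->
  forall k, (k <= n)%N ->
  stdet le A *s charcoef le (stnabla le A) k = charcoef le A (n - k).
Proof.
move=> hd hadj k; rewrite leq_eqVlt => /predU1P[->|hk].
  by rewrite charcoef_nabla_top subnn.
by rewrite charcoef_nabla // hadj // stpow_cancel.
Qed.

Definition en n (B : 'M[stropical G]_n.+1) (i j : nat) : stropical G :=
  B (inord i) (inord j).
Arguments en {n} B i%_N j%_N.

Lemma en_mx n (B : 'M[stropical G]_n.+1) (i j : 'I_n.+1) : B i j = en B i j.
Proof. by rewrite /en !inord_val. Qed.

Lemma lift_inord n (a : 'I_n.+2) (p : nat) : (p < n.+1)%N ->
  lift a (inord p) = inord (bump a p).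
Proof.
move=> hp; apply/val_inj; rewrite /= !inordK //.
have := ltn_ord a; rewrite /bump; case: leqP => /= _ h; lia.
Qed.

Lemma det1 (B : 'M[stropical G]_1) : stdet le B = en B 0 0.
Proof. by rewrite det_expand big_ord1 det0 mulC mul1s en_mx. Qed.

Ltac match_indices :=
  rewrite /en; repeat f_equal; apply/val_inj; rewrite /= ?inordK //.

Lemma det2 (B : 'M[stropical G]_2) :
  stdet le B = en B 0 0 *s en B 1 1 +s en B 0 1 *s en B 1 0.
Proof. rewrite det_expand !big_ord_recl big_ord0 adds0 !det1 /en !mxE; match_indices. Qed.

Lemma det3 (B : 'M[stropical G]_3) : stdet le B =
  en B 0 0 *s (en B 1 1 *s en B 2 2 +s en B 1 2 *s en B 2 1) +s
  (en B 0 1 *s (en B 1 0 *s en B 2 2 +s en B 1 2 *s en B 2 0) +s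
   en B 0 2 *s (en B 1 0 *s en B 2 1 +s en B 1 1 *s en B 2 0)).
Proof. rewrite det_expand !big_ord_recl big_ord0 adds0 !det2 /en !mxE; match_indices. Qed.

Lemma charcoef_trace n (M : 'M[stropical G]_n.+1) :
  charcoef le M n = \big[stadd le/NegInf]_(i < n.+1) M i i.
Proof.
rewrite /charcoef subSnn big_cards1; apply: eq_bigr => i _.
rewrite -(det_cast (cards1 i)) det1 /en castmxE !mxE.
by rewrite /= (set1P (enum_valP _)).
Qed.

Lemma det_principal_pair n (M : 'M[stropical G]_n) (x y : 'I_n) : x != y ->
  stdet le (principal_sub M [set x; y]) = M x x *s M y y +s M x y *s M y x.
Proof.
move=> nxy; have card2 : #|[set x; y]| = 2%N by rewrite cards2 nxy.
rewrite -(det_cast card2) det2 /en !castmxE !mxE /=.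
set x' := enum_val _; set y' := enum_val (cast_ord _ (inord 1)).
have nx'y' : x' != y'.
  by rewrite (inj_eq enum_val_inj) (inj_eq (@cast_ord_inj _ _ _)) -(inj_eq val_inj) /= !inordK.
have /set2P[ex'|ex'] := enum_valP (cast_ord (esym card2) (inord 0)).
all: have /set2P[ey'|ey'] := enum_valP (cast_ord (esym card2) (inord 1)).
all: rewrite -/x' -/y' in ex' ey'; rewrite ex' ey'.
all: try by move: nx'y'; rewrite ex' ey' eqxx.
all: ring.
Qed.

Lemma setC1_ord3 (x y z : 'I_3) : x != y -> x != z -> y != z ->
  ~: [set x] = [set y; z].
Proof.
move=> nxy nxz nyz; apply/setP => t; rewrite !inE.
by case: x y z t nxy nxz nyz => [[|[|[|?]]] ?] [[|[|[|?]]] ?] [[|[|[|?]]] ?] [[|[|[|?]]] ?].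
Qed.

Lemma big_card_setC n r (F : {set 'I_n} -> stropical G) : (r <= n)%N ->
  \big[stadd le/NegInf]_(S : {set 'I_n} | #|S| == r) F S =
  \big[stadd le/NegInf]_(S : {set 'I_n} | #|S| == (n - r)%N) F (~: S).
Proof.
move=> rn; rewrite (reindex_inj (@setC_inj _)); apply: eq_bigl => S /=.
have := cardsC S; rewrite card_ord.
move: #|S| #|~: S| => a b hab; apply/eqP/eqP; lia.
Qed.

Lemma charcoef3_mid (M : 'M[stropical G]_3) : charcoef le M 1 =
  (en M 1 1 *s en M 2 2 +s en M 1 2 *s en M 2 1) +s
  ((en M 0 0 *s en M 2 2 +s en M 0 2 *s en M 2 0) +s
   (en M 0 0 *s en M 1 1 +s en M 0 1 *s en M 1 0)).
Proof.
rewrite /charcoef big_card_setC // big_cards1 !big_ord_recl big_ord0 /= adds0.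
rewrite (@setC1_ord3 _ (lift ord0 ord0) (lift ord0 (lift ord0 ord0))) //.
rewrite (@setC1_ord3 _ ord0 (lift ord0 (lift ord0 ord0))) //.
rewrite (@setC1_ord3 _ ord0 (lift ord0 ord0)) //.
by rewrite !det_principal_pair // !en_mx.
Qed.

Lemma adj2E (A : 'M[stropical G]_2) (i j : nat) : (i < 2)%N -> (j < 2)%N ->
  en (stadj le A) i j = en A (bump j 0) (bump i 0).
Proof. by move=> hi hj; rewrite /en !mxE det1 /en !mxE !lift_inord // !inordK. Qed.

Lemma adj3E (A : 'M[stropical G]_3) (i j : nat) : (i < 3)%N -> (j < 3)%N ->
  en (stadj le A) i j =
    en A (bump j 0) (bump i 0) *s en A (bump j 1) (bump i 1) +s
    en A (bump j 0) (bump i 1) *s en A (bump j 1) (bump i 0).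
Proof. by move=> hi hj; rewrite /en !mxE det2 /en !mxE !lift_inord // !inordK. Qed.

Lemma charcoef_adj2 (A : 'M[stropical G]_2) k : (k < 2)%N ->
  charcoef le (stadj le A) k = stpow (stdet le A) (2 - k).-1 *s charcoef le A (2 - k).
Proof.
case: k => [|[|//]] _; rewrite ?stpowS stpow0 ?muls1 ?mul1s.
- rewrite !charcoef_det charcoef_top muls1 !det2 !adj2E // /bump /= ?addn0 ?add0n ?add1n; ring.
- rewrite !charcoef_trace !big_ord_recl !big_ord0 /= !adds0 !en_mx /=.
  by rewrite !adj2E // /bump /= ?addn0 ?add0n ?add1n; ring.
Qed.

(* For 3x3 matrices the classical identities det(adj A) = det(A)^2 and
   c_1(adj A) = det(A) tr(A) hold up to doubled, hence ghost, terms, while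
   tr(adj A) = c_1(A) holds exactly. *)
Lemma charcoef_adj3 (A : 'M[stropical G]_3) k : (k < 3)%N ->
  gs le (charcoef le (stadj le A) k)
        (stpow (stdet le A) (3 - k).-1 *s charcoef le A (3 - k)).
Proof.
case: k => [|[|[|//]]] _; rewrite ?stpowS stpow0 ?muls1 ?mul1s.
- rewrite !charcoef_det charcoef_top muls1 !det3 !adj3E // /bump /= ?addn0 ?add0n ?add1n.
  set Q := en A 0 1 *s en A 0 2 *s en A 1 0 *s en A 1 1 *s en A 2 0 *s en A 2 2 +s
           en A 0 0 *s en A 0 1 *s en A 1 0 *s en A 1 2 *s en A 2 1 *s en A 2 2 +s
           en A 0 0 *s en A 0 2 *s en A 1 1 *s en A 1 2 *s en A 2 0 *s en A 2 1 +s
           en A 0 1 *s en A 0 2 *s en A 1 0 *s en A 1 2 *s en A 2 0 *s en A 2 1 +s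
           en A 0 0 *s en A 0 1 *s en A 1 1 *s en A 1 2 *s en A 2 0 *s en A 2 2 +s
           en A 0 0 *s en A 0 2 *s en A 1 0 *s en A 1 1 *s en A 2 1 *s en A 2 2.
  match goal with |- gs le ?L ?R => have -> : L = R +s (Q +s Q) by rewrite /Q; ring end.
  exact: gs_add_double.
- rewrite charcoef3_mid (_ : (3 - 1 = 2)%N) // charcoef_trace !big_ord_recl !big_ord0 /=.
  rewrite !adds0 !en_mx /= det3 !adj3E // /bump /= ?addn0 ?add0n ?add1n.
  set Q := en A 1 0 *s en A 0 1 *s en A 2 0 *s en A 0 2 +s
           en A 0 1 *s en A 1 0 *s en A 2 1 *s en A 1 2 +s
           en A 0 2 *s en A 2 0 *s en A 1 2 *s en A 2 1.
  match goal with |- gs le ?L ?R => have -> : L = R +s (Q +s Q) by rewrite /Q; ring end.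
  exact: gs_add_double.
- left; rewrite (_ : (3 - 2 = 1)%N) // charcoef_trace charcoef3_mid !big_ord_recl !big_ord0 /=.
  rewrite !adds0 !en_mx /= !adj3E // /bump /= ?addn0 ?add0n ?add1n; ring.
Qed.

End Supertropical.

Theorem mainTheorem11 (G : zmodType) (le : rel G) (HG : ordered_group le)
  (m : nat) (Hm : m = 2%N \/ m = 3%N) (A : 'M[stropical G]_m)
  (Hns : tangible (stdet le A)) :
  (forall k : nat, (k <= m)%N ->
     gs le (stmul (stdet le A) (charcoef le (stnabla le A) k))
           (charcoef le A (m - k)))
  /\ (m = 2%N -> forall k : nat, (k <= m)%N ->
     stmul (stdet le A) (charcoef le (stnabla le A) k) = charcoef le A (m - k)).
Proof.
case: Hm => em; subst m.
- have exact2 := nabla_charcoef_eq HG Hns (@charcoef_adj2 _ _ HG A).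
  by split=> [k /exact2 ->|_]; [left|].
- have surpass3 := nabla_charcoef_gs HG Hns (@charcoef_adj3 _ _ HG A).
  by split=> // k /surpass3.
Qed.
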